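(* Let $z$ be a positive integer and let $C$ be a quasi-cyclic LDPC code with circulant matrices of size $z$ whose base matrix is the $12\times 24$ matrix $H_{b(1/2)}$ below. Then there is no quasi-cyclic LDPC code $D$ of type IEEE802.16e with circulant matrices of size $z$ such that (i) the parity-check matrices $H_C$ and $H_D$ have the same row-weight distribution, (ii) every column of $H_D$ has Hamming weight at least $2$, and (iii) $D^{\perp}\subset C$. The rows of $H_{b(1/2)}$ are: 011000001100110000000000, 010001110001011000000000, 000111010001001100000000, 101000001100000110000000, 001000100110000011000000, 000011010001100001100000, 001100000110000000110000, 011000100100000000011000, 100011010001000000001100, 000001010011000000000110, 001100001100000000000011, 100001010001100000000001.
   Context: All codes are binary linear codes over $\mathbb{F}_2$; $D^{\perp}=\{d' : d\,d'^T=0\ \forall d\in D\}$. For a positive integer $z$, $I_z(1)$ is the $z\times z$ circulant permutation matrix of one circular right shift and $I_z(b)=I_z(1)^b$. A quasi-cyclic LDPC code with circulant matrices of size $z$ is given by a $J\times L$ model matrix with entries in $\{0,\dots,z-1\}\cup\{\infty\}$; its parity-check matrix $H$ is obtained by replacing each finite entry $p$ by $I_z(p)$ and each $\infty$ by the $z\times z$ zero matrix, and the code is $\{x\in\mathbb{F}_2^{zL}:Hx^T=0\}$. Its base matrix $H_b$ is the binary $J\times L$ matrix with $1$ exactly where the model entry is finite. The row-weight distribution of a binary matrix is, for each $w$, the number of rows of Hamming weight $w$. A quasi-cyclic LDPC code is of type IEEE802.16e if its base matrix has the form $H_b=[H_{b1}\mid h_b\mid H'_{b2}]$, where $H_{b1}$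 is $J\times(L-J)$ arbitrary, $h_b=(h_b(0),\dots,h_b(J-1))^T$ is a column of weight $3$ with $h_b(0)=h_b(J-1)=1$ and $h_b(j)=1$ for exactly one $0<j<J-1$, and $H'_{b2}$ is the $J\times(J-1)$ dual-diagonal matrix with entries $1$ at positions $(i,i)$ and $(i+1,i)$ and $0$ elsewhere; moreover, in the model matrix every $1$ of $H'_{b2}$ has shift $0$, and the top and bottom $1$'s of $h_b$ have equal shift sizes while the middle $1$ of $h_b$ has its own (unpaired) shift size. The matrix $H_{b(1/2)}$ is the base matrix of the rate-$1/2$ LDPC codes of the IEEE802.16e standard. *)

From mathcomp Require Import all_boot all_algebra.
Set Implicit Arguments. Unset Strict Implicit. Unset Printing Implicit Defensive.
Import GRing.Theory.
Local Open Scope ring_scope.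

(* A model matrix: entries in {0,..,z-1} u {oo}, with None standing for oo. *)
Definition model_matrix (z J L : nat) := 'M[option 'I_z]_(J, L).

Lemma blk_proof (J z : nat) (i : 'I_(J * z)) : (i %/ z < J)%N.
Proof.
case: i => i /=; case: z => [|z]; first by rewrite muln0.
by move=> H; rewrite ltn_divLR.
Qed.
Definition blk (J z : nat) (i : 'I_(J * z)) : 'I_J := Ordinal (blk_proof i).

(* I_z(b) = I_z(1)^b, where I_z(1) (circular right shift) has its 1's at
   positions (r, r+1 mod z). *)
Definition circ_entry (z b r c : nat) : 'F_2 :=
  if (c == (r + b) %% z)%N then 1 else 0.

Definition pcm (z J L : nat) (M : model_matrix z J L) : 'M['F_2]_(J * z, L * z) :=
  \matrix_(i, j)
    match M (blk i) (blk j) return 'F_2 with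
    | Some p => circ_entry z p (i %% z)%N (j %% z)%N
    | None => 0
    end.

Definition base_matrix (z J L : nat) (M : model_matrix z J L) : 'M[bool]_(J, L) :=
  \matrix_(i, j) (M i j != None).

Definition code (m n : nat) (H : 'M['F_2]_(m, n)) : {set 'rV['F_2]_n} :=
  [set x : 'rV['F_2]_n | H *m x^T == 0].
Definition dual_code (n : nat) (D : {set 'rV['F_2]_n}) : {set 'rV['F_2]_n} :=
  [set d' : 'rV['F_2]_n | [forall d in D, d *m d'^T == 0]].

Definition hwt (n : nat) (v : 'rV['F_2]_n) : nat := #|[set j | v 0 j != 0]|.
Definition row_weight_count (m n : nat) (H : 'M['F_2]_(m, n)) (w : nat) : nat :=
  #|[set i | hwt (row i H) == w]|.
Definition same_row_weight_distribution (m1 m2 n1 n2 : nat)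
  (H1 : 'M['F_2]_(m1, n1)) (H2 : 'M['F_2]_(m2, n2)) : Prop :=
  forall w : nat, row_weight_count H1 w = row_weight_count H2 w.
Definition col_weight (m n : nat) (H : 'M['F_2]_(m, n)) (j : 'I_n) : nat :=
  #|[set i | H i j != 0]|.

(* Columns 0..L-J-1 : H_b1 (arbitrary); column L-J : h_b; columns
   L-J+1+k (k = 0..J-2) : dual-diagonal H'_b2 with all shifts 0. *)
Definition type_IEEE80216e (z J L : nat) (M : model_matrix z J L) : Prop :=
  (J <= L)%N /\
  (exists (c : 'I_L), val c = (L - J)%N /\
     exists a b : 'I_z, exists j : 'I_J,
       (0 < val j)%N /\ (val j < J.-1)%N /\
       forall r : 'I_J,
         M r c = (if (val r == 0%N) || (val r == J.-1) then Some a
                  else if r == j then Some b else None)) /\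
  (forall (r : 'I_J) (c : 'I_L) (k : nat), val c = (L - J + 1 + k)%N ->
     if (val r == k) || (val r == k.+1)
     then exists p : 'I_z, M r c = Some p /\ val p = 0%N
     else M r c = None).

Definition Hb12_rows : seq (seq nat) :=
  [:: [:: 0;1;1;0;0;0;0;0;1;1;0;0;1;1;0;0;0;0;0;0;0;0;0;0];
      [:: 0;1;0;0;0;1;1;1;0;0;0;1;0;1;1;0;0;0;0;0;0;0;0;0];
      [:: 0;0;0;1;1;1;0;1;0;0;0;1;0;0;1;1;0;0;0;0;0;0;0;0];
      [:: 1;0;1;0;0;0;0;0;1;1;0;0;0;0;0;1;1;0;0;0;0;0;0;0];
      [:: 0;0;1;0;0;0;1;0;0;1;1;0;0;0;0;0;1;1;0;0;0;0;0;0];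
      [:: 0;0;0;0;1;1;0;1;0;0;0;1;1;0;0;0;0;1;1;0;0;0;0;0];
      [:: 0;0;1;1;0;0;0;0;0;1;1;0;0;0;0;0;0;0;1;1;0;0;0;0];
      [:: 0;1;1;0;0;0;1;0;0;1;0;0;0;0;0;0;0;0;0;1;1;0;0;0];
      [:: 1;0;0;0;1;1;0;1;0;0;0;1;0;0;0;0;0;0;0;0;1;1;0;0];
      [:: 0;0;0;0;0;1;0;1;0;0;1;1;0;0;0;0;0;0;0;0;0;1;1;0];
      [:: 0;0;1;1;0;0;0;0;1;1;0;0;0;0;0;0;0;0;0;0;0;0;1;1];
      [:: 1;0;0;0;0;1;0;1;0;0;0;1;1;0;0;0;0;0;0;0;0;0;0;1] ].

Definition Hb12 : 'M[bool]_(12, 24) :=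
  \matrix_(i, j) (nth 0%N (nth [::] Hb12_rows i) j == 1%N).

From mathcomp Require Import all_boot all_algebra.
Set Implicit Arguments. Unset Strict Implicit. Unset Printing Implicit Defensive.
Import GRing.Theory.
Local Open Scope ring_scope.

(* Equal row-weight distributions force D to have J = 12 block rows. The first
   row d of H_D lies in D^perp, hence in C. Every column of a circulant has
   exactly one 1, so adding up all rows of H_C in a set I of block rows gives
   the vector equal, on block column k, to the parity of the number of 1's of
   column k of H_b(1/2) in the rows I. For I = {0,3,4,7,9,11} this parity is 1
   on column 13 and 0 on columns 0..12, while the IEEE802.16e shape makes the
   first block row of D vanish on columns 14..23 and be a permutation matrix on
   column 13. So the inner product of that sum with d is 1, contradicting
   d \in C. *)

Section BlockSums.
Variables (z : nat) (R : nmodType).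
Hypothesis z_gt0 : (0 < z)%N.

Lemma sum_blk (n : nat) (k : 'I_n) (F : nat -> R) :
  \sum_(i : 'I_(n * z) | blk i == k) F (i %% z)%N = \sum_(c < z) F c.
Proof.
rewrite (eq_bigl (fun i : 'I_(n * z) => i %/ z == k)%N) => [|i]; last first.
  by rewrite -val_eqE.
rewrite -(big_mkord (fun i => i %/ z == k)%N (fun i => F (i %% z)%N)).
have kz_le : (k * z + z <= n * z)%N by rewrite addnC -mulSn leq_mul2r ltn_ord orbT.
rewrite (big_cat_nat (leq0n (k * z)) (leq_trans (leq_addr z _) kz_le)).
rewrite (big_cat_nat (leq_addr z _) kz_le) /=.
rewrite big_nat_cond big1 ?add0r => [|i /andP[/andP[_ lt_i] /eqP i_k]]; last first.
  by move: lt_i; rewrite -ltn_divLR // i_k ltnn.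
rewrite [X in _ + X]big_nat_cond [X in _ + X]big1 ?addr0; last first.
  move=> i /andP[/andP[le_i _] /eqP i_k].
  by move: le_i; rewrite addnC -mulSn -leq_divRL // i_k ltnn.
rewrite -{1}[(k * z)%N]add0n big_addn addKn big_mkord big_mkcond /=.
apply: eq_bigr => i _.
by rewrite addnC divnMDl // divn_small // addn0 eqxx modnMDl modn_small.
Qed.

End BlockSums.

Lemma sum_circ_entry_row (z p r : nat) : (0 < z)%N ->
  \sum_(c < z) circ_entry z p r c = 1.
Proof.
move=> z_gt0; rewrite (bigD1 (Ordinal (ltn_pmod (r + p) z_gt0))) //=.
rewrite /circ_entry eqxx big1 ?addr0 // => c c_ne.
by move: c_ne; rewrite -val_eqE /= => /negbTE ->.
Qed.

Lemma sum_circ_entry_col (z p : nat) (c : 'I_z) :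
  \sum_(a < z) circ_entry z p a c = 1.
Proof.
have z_gt0 : (0 < z)%N := leq_ltn_trans (leq0n c) (ltn_ord c).
pose shift (a : 'I_z) : 'I_z := Ordinal (ltn_pmod (a + p) z_gt0).
have shift_inj : injective shift.
  move=> a b /(congr1 val) /= /eqP; rewrite eqn_modDr !modn_small //.
  by move/eqP/val_inj.
rewrite (eq_bigr (fun a => (shift a == c)%:R)) => [|a _]; last first.
  by rewrite /circ_entry -val_eqE /= eq_sym; case: eqP.
have -> : \sum_(a < z) ((shift a == c)%:R : 'F_2) = \sum_(b < z) (b == c)%:R.
  by rewrite [RHS](reindex_inj shift_inj).
rewrite (bigD1 c) //=.
by rewrite eqxx big1 ?addr0 // => b /negbTE ->.
Qed.

Definition base_entry (z : nat) (o : option 'I_z) : 'F_2 :=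
  if o is Some _ then 1 else 0.

Lemma base_entry_base_matrix (z J L : nat) (M : model_matrix z J L) i j :
  base_entry (M i j) = (base_matrix M i j)%:R.
Proof. by rewrite mxE; case: (M i j). Qed.

Section ParityCheckMatrix.
Variables (z J L : nat) (M : model_matrix z J L).
Hypothesis z_gt0 : (0 < z)%N.

Lemma sum_pcm_row_blk (r : 'I_(J * z)) (k : 'I_L) :
  \sum_(j | blk j == k) pcm M r j = base_entry (M (blk r) k).
Proof.
pose F c := if M (blk r) k is Some p then circ_entry z p (r %% z) c else 0.
rewrite (eq_bigr (fun j : 'I_(L * z) => F (j %% z)%N)) => [|j /eqP j_k]; last first.
  by rewrite mxE j_k.
rewrite sum_blk // /F; case: (M (blk r) k) => [p|]; first exact: sum_circ_entry_row.
by rewrite big1.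
Qed.

Lemma sum_pcm_col_blk (i : 'I_J) (j : 'I_(L * z)) :
  \sum_(r | blk r == i) pcm M r j = base_entry (M i (blk j)).
Proof.
pose F a := if M i (blk j) is Some p then circ_entry z p a (j %% z) else 0.
rewrite (eq_bigr (fun r : 'I_(J * z) => F (r %% z)%N)) => [|r /eqP r_i]; last first.
  by rewrite mxE r_i.
rewrite sum_blk // /F; case: (M i (blk j)) => [p|]; last by rewrite big1.
exact: (sum_circ_entry_col p (Ordinal (ltn_pmod j z_gt0))).
Qed.

Lemma pcm_row_dot_blk (f : 'I_L -> 'F_2) (r : 'I_(J * z)) :
  \sum_j f (blk j) * pcm M r j = \sum_k f k * base_entry (M (blk r) k).
Proof.
rewrite (partition_big (@blk L z) xpredT) //=; apply: eq_bigr => k _.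
rewrite (eq_bigr (fun j => f k * pcm M r j)) => [|j /eqP-> //].
by rewrite -mulr_sumr sum_pcm_row_blk.
Qed.

(* The inner sum is entry j of the sum of the rows of [pcm M] lying in the
   block rows [P]. *)
Lemma code_orth_blk_rows (P : pred 'I_J) (x : 'rV['F_2]_(L * z)) :
  x \in code (pcm M) ->
  \sum_j (\sum_(i | P i) base_entry (M i (blk j))) * x 0 j = 0.
Proof.
rewrite inE => /eqP x_code.
transitivity (\sum_(i | P i) \sum_(r | blk r == i) (pcm M *m x^T) r 0); last first.
  by rewrite x_code; apply: big1 => i _; apply: big1 => r _; rewrite mxE.
under [RHS]eq_bigr => i _ do under eq_bigr => r _ do rewrite mxE.
under [RHS]eq_bigr => i _ do rewrite exchange_big.
rewrite [RHS]exchange_big /=; apply: eq_bigr => j _.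
rewrite mulr_suml; apply: eq_bigr => i _.
by rewrite -sum_pcm_col_blk mulr_suml; apply: eq_bigr => r _; rewrite !mxE.
Qed.

End ParityCheckMatrix.

Lemma row_in_dual_code (m n : nat) (H : 'M['F_2]_(m, n)) (i : 'I_m) :
  row i H \in dual_code (code H).
Proof.
rewrite inE; apply/forallP => x; apply/implyP; rewrite inE => /eqP Hx.
apply/eqP; rewrite -[LHS]trmxK trmx_mul trmxK -row_mul Hx.
by apply/matrixP => a b; rewrite !mxE.
Qed.

Lemma hwt_le (n : nat) (v : 'rV['F_2]_n) : (hwt v <= n)%N.
Proof. by rewrite /hwt -[n in (_ <= n)%N]card_ord max_card. Qed.

Lemma sum_row_weight_count (m n N : nat) (H : 'M['F_2]_(m, n)) : (n <= N)%N ->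
  (\sum_(w < N.+1) row_weight_count H w)%N = m.
Proof.
move=> le_nN; rewrite /row_weight_count.
under eq_bigr => w _ do rewrite -sum1_card big_mkcond /=.
rewrite exchange_big /= -[m in RHS]card_ord -sum1_card; apply: eq_bigr => i _.
have lt_wt : (hwt (row i H) < N.+1)%N by rewrite ltnS (leq_trans (hwt_le _)).
rewrite (bigD1 (Ordinal lt_wt)) //= inE eqxx big1 ?addn0 // => w w_ne.
by move: w_ne; rewrite inE eq_sym -val_eqE /= => /negbTE ->.
Qed.

Lemma same_row_weight_distribution_rows (m1 m2 n1 n2 : nat)
    (H1 : 'M['F_2]_(m1, n1)) (H2 : 'M['F_2]_(m2, n2)) :
  same_row_weight_distribution H1 H2 -> m1 = m2.
Proof.
move=> same_rwd.
rewrite -(sum_row_weight_count H1 (leq_maxl n1 n2)).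
rewrite -(sum_row_weight_count H2 (leq_maxr n1 n2)).
by apply: eq_bigr => w _; apply: same_rwd.
Qed.

Lemma type_IEEE80216e_row0 (z J L : nat) (M : model_matrix z J L)
    (r : 'I_J) (c : 'I_L) :
  type_IEEE80216e M -> val r = 0%N -> (L - J < c)%N ->
  base_entry (M r c) = (val c == (L - J).+1)%:R.
Proof.
case=> _ [_ dual_diag] r0 lt_c.
have := dual_diag r c (c - (L - J).+1)%N; rewrite addn1 subnKC // r0 => /(_ erefl).
have [c_eq | c_ne] := eqVneq (val c) (L - J).+1.
  by rewrite c_eq subnn eqxx => -[p [-> _]].
have lt_c' : ((L - J).+1 < c)%N by rewrite ltn_neqAle lt_c eq_sym c_ne.
by rewrite eq_sym subn_eq0 leqNgt lt_c' => ->.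
Qed.

Definition parity_rows : pred 'I_12 := fun i => val i \in [:: 0; 3; 4; 7; 9; 11]%N.

Lemma Hb12_parity_rows (k : 'I_24) : (k <= 13)%N ->
  odd (\sum_(i < 12 | parity_rows i) Hb12 i k) = (val k == 13%N).
Proof.
rewrite big_mkcond !big_ord_recl big_ord0 /= !mxE.
by case: k => k /= _; do 14! [case: k => [|k] //].
Qed.

Lemma parity_rows_base_entry (z : nat) (M : model_matrix z 12 24) (k : 'I_24) :
  base_matrix M = Hb12 -> (k <= 13)%N ->
  \sum_(i | parity_rows i) base_entry (M i k) = (val k == 13%N)%:R.
Proof.
move=> base_M le_k13.
under eq_bigr => i _ do rewrite base_entry_base_matrix base_M.
by rewrite -natr_sum -(@Fp_nat_mod 2) // modn2 Hb12_parity_rows.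
Qed.

Theorem mainTheorem4 (z : nat) (hz : (0 < z)%N) (MC : model_matrix z 12 24)
  (hC : base_matrix MC = Hb12) :
  ~ exists (J : nat) (MD : model_matrix z J 24),
      [/\ type_IEEE80216e MD,
          same_row_weight_distribution (pcm MC) (pcm MD),
          (forall j, (2 <= col_weight (pcm MD) j)%N)
        & dual_code (code (pcm MD)) \subset code (pcm MC)].
Proof.
case=> J [MD [typeD same_rwd _ dual_sub]].
have /eqP := same_row_weight_distribution_rows same_rwd.
rewrite eqn_pmul2r // => /eqP J12; subst J.
have lt_0_12z : (0 < 12 * z)%N by rewrite muln_gt0 hz.
pose r0 : 'I_(12 * z) := Ordinal lt_0_12z.
have d_in_C := subsetP dual_sub _ (row_in_dual_code (pcm MD) r0).
have := code_orth_blk_rows hz parity_rows d_in_C.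
under eq_bigr => j _ do rewrite mxE.
rewrite (pcm_row_dot_blk MD hz (fun k => \sum_(i | parity_rows i) base_entry (MC i k))).
have -> : blk r0 = ord0 by apply: val_inj; rewrite /= div0n.
have term_k (k : 'I_24) :
    (\sum_(i | parity_rows i) base_entry (MC i k)) * base_entry (MD ord0 k)
    = (val k == 13%N)%:R.
  case: (leqP k 13) => [le_k13 | lt_k13].
    rewrite parity_rows_base_entry //; case: eqP => [k13 | _]; last by rewrite mul0r.
    by rewrite type_IEEE80216e_row0 ?k13 // mul1r.
  by rewrite type_IEEE80216e_row0 ?(ltnW lt_k13) // (gtn_eqF lt_k13) mulr0.
under eq_bigr => k _ do rewrite term_k.
rewrite (bigD1 (inord 13%N)) //= inordK // eqxx big1 ?addr0 => [|k k_ne].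
  by move/eqP; rewrite oner_eq0.
by move: k_ne; rewrite -val_eqE /= inordK // => /negbTE ->.
Qed.
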